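(* Let $A$ be a partial ring, $X=X_A$ with sheaf $\mathcal{O}_X$, and $x=\mathfrak{p}\in X_A$. Then the stalk $\mathcal{O}_{X,x}$ of $\mathcal{O}_X$ at $x$ coincides with the localization $A_{\mathfrak{p}}$.
   Context: A partial ring is a set $A$ with $0$, a set $A_2\subseteq A\times A$ of summable pairs and a partial addition $+\colon A_2\to A$ (with $0$ a unit summable with everything, commutative, and associative in the sense: $(a,b),(a+b,c)\in A_2$ iff $(b,c),(a,b+c)\in A_2$, and then $(a+b)+c=a+(b+c)$), together with a commutative associative multiplication with unit $1$ such that $0\cdot a=0$ and $(a_1,a_2)\in A_2\Rightarrow(a_1x,a_2x)\in A_2$, $(a_1+a_2)x=a_1x+a_2x$. Ideals and prime ideals are defined as for rings (an ideal is a subset $I\ni 0$ closed under sums of summable pairs of its elements and with $AI\subseteq I$; prime: $I\ne A$ and $ab\in I\Rightarrow a\in I$ or $b\in I$). For a multiplicative subset $S$ (containing $1$, closed under products), $S^{-1}A$ is the set of classes $a/s$ ($a\in A,s\in S$) with $a/s=b/t$ iff $uta=usb$ for some $u\in S$, multiplication $\frac{a}{s}\frac{b}{t}=\frac{ab}{st}$, and $(a/s,b/t)$ summable iff $(uta,usb)\in A_2$ for some $u\in S$; $A_{\mathfrak p}=(A\setminus\mathfrak p)^{-1}A$. $X_A$ is the set of prime ideals with the topology generated by $D(a)=\{\mathfrak p: a\notin\mathfrak p\}$. For an open $U\subseteq X_A$, $S_U=\{a\in A: a\notin\mathfrak p\text{ for all }\mathfrak p\in U\}$; $U\mapsto S_U^{-1}A$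 is a presheaf of partial rings $\mathcal{O}'_X$, and $\mathcal{O}_X$ is its sheafification. *)

From Stdlib Require Import List ClassicalEpsilon.

Set Implicit Arguments.
Unset Strict Implicit.

(* Partial rings.  The partial addition is a total function [padd] whose
   values are only meaningful on summable pairs ([psumm a b]).          *)
Record PartialRing := {
  pr_car :> Type;
  pzero : pr_car;
  pone : pr_car;
  psumm : pr_car -> pr_car -> Prop;
  padd : pr_car -> pr_car -> pr_car;
  pmul : pr_car -> pr_car -> pr_car;
  pzero_unit : forall a, psumm pzero a /\ padd pzero a = a;
  psumm_comm : forall a b, psumm a b -> psumm b a /\ padd a b = padd b a;
  psumm_assoc : forall a b c,
    (psumm a b /\ psumm (padd a b) c) <-> (psumm b c /\ psumm a (padd b c));
  padd_assoc : forall a b c, psumm a b -> psumm (padd a b) c ->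
    padd (padd a b) c = padd a (padd b c);
  pmul_comm : forall a b, pmul a b = pmul b a;
  pmul_assoc : forall a b c, pmul (pmul a b) c = pmul a (pmul b c);
  pmul_one : forall a, pmul pone a = a;
  pmul_zero : forall a, pmul pzero a = pzero;
  pdistr : forall a1 a2 x, psumm a1 a2 ->
    psumm (pmul a1 x) (pmul a2 x) /\ pmul (padd a1 a2) x = padd (pmul a1 x) (pmul a2 x)
}.

Arguments pzero {_}. Arguments pone {_}.
Arguments psumm {_} _ _. Arguments padd {_} _ _. Arguments pmul {_} _ _.

(* Partial-ring structures given by the graphs of their operations
   (zero, one, partial addition, multiplication), used for the
   localizations and stalks, and isomorphisms between them.            *)
Record PRStruct := {
  ps_car :> Type;
  ps_zero : ps_car -> Prop;
  ps_one : ps_car -> Prop;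
  ps_add : ps_car -> ps_car -> ps_car -> Prop;   (* (x,y) summable with sum z *)
  ps_mul : ps_car -> ps_car -> ps_car -> Prop
}.
Arguments ps_zero : clear implicits. Arguments ps_one : clear implicits.
Arguments ps_add : clear implicits. Arguments ps_mul : clear implicits.

Definition pr_iso (M N : PRStruct) (f : M -> N) : Prop :=
  (forall x y, f x = f y -> x = y) /\ (forall y, exists x, f x = y) /\
  (forall x, ps_zero M x <-> ps_zero N (f x)) /\
  (forall x, ps_one M x <-> ps_one N (f x)) /\
  (forall x y z, ps_add M x y z <-> ps_add N (f x) (f y) (f z)) /\
  (forall x y z, ps_mul M x y z <-> ps_mul N (f x) (f y) (f z)).

Definition quot (T : Type) (R : T -> T -> Prop) : Type :=
  {P : T -> Prop | exists x, P = R x}.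
Definition cls (T : Type) (R : T -> T -> Prop) (x : T) : quot R :=
  exist _ (R x) (ex_intro _ x eq_refl).
Definition rep (T : Type) (R : T -> T -> Prop) (q : quot R) : T :=
  proj1_sig (constructive_indefinite_description _ (proj2_sig q)).

Section Localization.
Variables (A : PartialRing) (S : A -> Prop).

Definition locpair := {x : A * A | S (snd x)}.
Definition lp_num (x : locpair) : A := fst (proj1_sig x).
Definition lp_den (x : locpair) : A := snd (proj1_sig x).

Definition locR (x y : locpair) : Prop :=
  exists u, S u /\
    pmul (pmul u (lp_den y)) (lp_num x) = pmul (pmul u (lp_den x)) (lp_num y).

Definition lcls (x : locpair) : quot locR := cls locR x.

Definition Loc : PRStruct := {|
  ps_car := quot locR;
  ps_zero := fun X => exists z, lp_num z = pzero /\ lp_den z = pone /\ X = lcls z;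
  ps_one := fun X => exists z, lp_num z = pone /\ lp_den z = pone /\ X = lcls z;
  ps_add := fun X Y Z => exists (x y z : locpair) (u : A), S u /\
      X = lcls x /\ Y = lcls y /\ Z = lcls z /\
      psumm (pmul (pmul u (lp_den y)) (lp_num x)) (pmul (pmul u (lp_den x)) (lp_num y)) /\
      lp_num z = padd (pmul (pmul u (lp_den y)) (lp_num x))
                      (pmul (pmul u (lp_den x)) (lp_num y)) /\
      lp_den z = pmul (pmul u (lp_den x)) (lp_den y);
  ps_mul := fun X Y Z => exists (x y z : locpair),
      X = lcls x /\ Y = lcls y /\ Z = lcls z /\
      lp_num z = pmul (lp_num x) (lp_num y) /\ lp_den z = pmul (lp_den x) (lp_den y)
|}.
End Localization.

Record Presheaf (X : Type) := {
  sec : (X -> Prop) -> PRStruct;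
  res : forall U V : X -> Prop, (forall x, V x -> U x) -> sec U -> sec V
}.

Arguments sec {X} _ _. Arguments res {X} _ {U V} _ _.

Section Stalks.
Variables (X : Type) (opn : (X -> Prop) -> Prop) (F : Presheaf X).

Definition GermRep (p : X) : Type :=
  {U : X -> Prop & ((opn U /\ U p) * ps_car (sec F U))%type}.
Definition gU (p : X) (g : GermRep p) : X -> Prop := projT1 g.
Definition gs (p : X) (g : GermRep p) : sec F (gU g) := snd (projT2 g).

Definition germR (p : X) (g h : GermRep p) : Prop :=
  exists (W : X -> Prop) (hg : forall x, W x -> gU g x) (hh : forall x, W x -> gU h x),
    opn W /\ W p /\ res F hg (gs g) = res F hh (gs h).

Definition germ (p : X) (U : X -> Prop) (h : opn U /\ U p) (s : sec F U)
  : quot (@germR p) := cls (@germR p) (existT _ U (h, s)).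

Definition Stalk (p : X) : PRStruct := {|
  ps_car := quot (@germR p);
  ps_zero := fun G => exists U (h : opn U /\ U p) s,
      ps_zero (sec F U) s /\ G = germ h s;
  ps_one := fun G => exists U (h : opn U /\ U p) s,
      ps_one (sec F U) s /\ G = germ h s;
  ps_add := fun G H K => exists U (h : opn U /\ U p) s t r,
      ps_add (sec F U) s t r /\ G = germ h s /\ H = germ h t /\ K = germ h r;
  ps_mul := fun G H K => exists U (h : opn U /\ U p) s t r,
      ps_mul (sec F U) s t r /\ G = germ h s /\ H = germ h t /\ K = germ h r
|}.

Definition locally_induced (U : X -> Prop) (s : forall x, U x -> Stalk x) : Prop :=
  forall x, U x -> exists (V : X -> Prop) (hV : opn V), V x /\
    exists t : sec F V, forall y (hyU : U y) (hyV : V y),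
      s y hyU = germ (conj hV hyV) t.

Definition sheaf_car (U : X -> Prop) : Type :=
  {s : forall x, U x -> Stalk x | locally_induced s}.

Definition sheaf_sec (U : X -> Prop) : PRStruct := {|
  ps_car := sheaf_car U;
  ps_zero := fun s => forall x (hx : U x), ps_zero (Stalk x) (proj1_sig s x hx);
  ps_one := fun s => forall x (hx : U x), ps_one (Stalk x) (proj1_sig s x hx);
  ps_add := fun s t r => forall x (hx : U x),
      ps_add (Stalk x) (proj1_sig s x hx) (proj1_sig t x hx) (proj1_sig r x hx);
  ps_mul := fun s t r => forall x (hx : U x),
      ps_mul (Stalk x) (proj1_sig s x hx) (proj1_sig t x hx) (proj1_sig r x hx)
|}.

Definition sheaf_res (U V : X -> Prop) (hVU : forall x, V x -> U x)
  (s : sheaf_car U) : sheaf_car V.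
Proof.
  refine (exist _ (fun x hx => proj1_sig s x (hVU x hx)) _).
  intros x hx.
  destruct (proj2_sig s x (hVU x hx)) as [W [hW [hWx [t ht]]]].
  exists W, hW; split; [exact hWx|]. exists t. intros y hyV hyW. apply ht.
Defined.

Definition Sheafify : Presheaf X := {| sec := sheaf_sec; res := sheaf_res |}.
End Stalks.

Section Spectrum.
Variable A : PartialRing.

Definition ideal (I : A -> Prop) : Prop :=
  I pzero /\
  (forall a b, I a -> I b -> psumm a b -> I (padd a b)) /\
  (forall a x, I x -> I (pmul a x)).

Definition prime_ideal (I : A -> Prop) : Prop :=
  ideal I /\ (exists a, ~ I a) /\ (forall a b, I (pmul a b) -> I a \/ I b).

Definition Spec : Type := {P : A -> Prop | prime_ideal P}.

Definition Dset (a : A) : Spec -> Prop := fun q => ~ proj1_sig q a.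

(* topology generated by the D(a): U open iff every point of U has a
   neighbourhood in U that is a finite intersection of sets D(a). *)
Definition opnX (U : Spec -> Prop) : Prop :=
  forall p, U p -> exists l : list A,
    (forall a, In a l -> Dset a p) /\
    (forall q, (forall a, In a l -> Dset a q) -> U q).

Definition S_U (U : Spec -> Prop) : A -> Prop :=
  fun a => forall q, U q -> ~ proj1_sig q a.

Definition embed_loc (U V : Spec -> Prop) (h : forall q, V q -> U q)
  (z : locpair (S_U U)) : locpair (S_U V) :=
  exist (fun x : A * A => S_U V (snd x)) (proj1_sig z)
    (fun q hq => proj2_sig z q (h q hq)).

Definition Opre : Presheaf Spec := {|
  sec := fun U => Loc (S_U U);
  res := fun U V h x => lcls (embed_loc h (rep x))
|}.

Definition OX : Presheaf Spec := Sheafify opnX Opre.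

Definition Loc_at (p : Spec) : PRStruct := Loc (fun a => ~ proj1_sig p a).
End Spectrum.

(* The isomorphism factors through the stalk O'_{X,p} of the presheaf.
   For any presheaf F, evaluation at p identifies the stalk of the sheafification
   with F_p: near p, a locally induced family of germs is the family of germs of a
   single section t, so it is determined by germ_p t.
   For O'_X, the germ of a/s in S_U^{-1}A goes to a/s in A_p, which makes sense as
   S_U avoids p when p lies in U. Any finite data in A_p (denominators, and a
   witness u of an equation or a sum) already lives in S_U for a basic open
   U = D(s_1) ∩ ... ∩ D(s_n) containing p, which gives injectivity, surjectivity
   and the reflection of zero, one, sums and products. *)

From Stdlib Require Import List RelationClasses ClassicalEpsilon ProofIrrelevance
  FunctionalExtensionality PropExtensionality.
Import ListNotations.

Set Implicit Arguments.
Unset Strict Implicit.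

Lemma sig_ext (T : Type) (P : T -> Prop) (a b : sig P) :
  proj1_sig a = proj1_sig b -> a = b.
Proof. apply eq_sig_hprop; intros; apply proof_irrelevance. Qed.

Lemma pr_iso_comp (M N P : PRStruct) (f : M -> N) (g : N -> P) :
  pr_iso f -> pr_iso g -> pr_iso (fun x => g (f x)).
Proof.
  intros [f_inj [f_surj [f0 [f1 [fadd fmul]]]]] [g_inj [g_surj [g0 [g1 [gadd gmul]]]]].
  split; [auto|]. split.
  { intro z. destruct (g_surj z) as [y <-]. destruct (f_surj y) as [x <-]. now exists x. }
  split; [intro; rewrite f0; apply g0|]. split; [intro; rewrite f1; apply g1|].
  split; intros; [rewrite fadd; apply gadd | rewrite fmul; apply gmul].
Qed.

(** * Quotients *)

Section Quotient.
Variables (T : Type) (R : T -> T -> Prop).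

Lemma cls_surj (q : quot R) : exists x, q = cls R x.
Proof. destruct q as [P [x eP]]. exists x. now apply sig_ext. Qed.

Lemma cls_eq_iff (R_equiv : Equivalence R) (x y : T) : cls R x = cls R y <-> R x y.
Proof.
  split.
  - intro e. apply (f_equal (@proj1_sig _ _)) in e. cbn in e. rewrite e. reflexivity.
  - intro Rxy. apply sig_ext; cbn.
    apply functional_extensionality; intro z.
    apply propositional_extensionality; split; intro; [symmetry in Rxy|]; etransitivity; eauto.
Qed.

Definition qlift {B : Type} (f : T -> B) (q : quot R) : B := f (rep q).

Lemma qlift_cls {B : Type} (R_refl : forall x, R x x) (f : T -> B) (x : T) :
  (forall y z, R y z -> f y = f z) -> qlift f (cls R x) = f x.
Proof.
  intro f_compat. apply f_compat.
  unfold rep; destruct constructive_indefinite_description as [y ey]; cbn in *.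
  rewrite <- ey. apply R_refl.
Qed.
End Quotient.

(** * Localization *)

Section MulMonoid.
Variable A : PartialRing.

Lemma pmul_lcomm (a b c : A) : pmul a (pmul b c) = pmul b (pmul a c).
Proof. now rewrite <- !pmul_assoc, (pmul_comm a b). Qed.

Lemma pmul_medial (a b c d : A) :
  pmul (pmul a b) (pmul c d) = pmul (pmul a c) (pmul b d).
Proof. now rewrite !pmul_assoc, (pmul_lcomm b c d). Qed.
End MulMonoid.

Section Localization.
Variables (A : PartialRing) (S : A -> Prop).

Lemma locR_refl (x : locpair S) : locR x x.
Proof. exists (lp_den x). split; [exact (proj2_sig x) | reflexivity]. Qed.

Hypothesis S_mul : forall a b, S a -> S b -> S (pmul a b).

Lemma locR_equiv : Equivalence (@locR A S).
Proof.
  split.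
  - exact locR_refl.
  - intros x y [u [Su e]]. now exists u.
  - intros x y z [u [Su e1]] [v [Sv e2]].
    set (w := pmul (pmul u v) (lp_den y)).
    exists w. split; [apply S_mul; [apply S_mul|]; auto; exact (proj2_sig y)|].
    assert (wz : pmul w (lp_den z) = pmul (pmul v (lp_den z)) (pmul u (lp_den y))).
    { unfold w. now rewrite pmul_medial, (pmul_comm v u), (pmul_comm (lp_den z)), pmul_assoc. }
    assert (wx : pmul w (lp_den x) = pmul (pmul u (lp_den x)) (pmul v (lp_den y))).
    { unfold w. now rewrite pmul_medial, (pmul_comm (lp_den x)), pmul_assoc. }
    rewrite wz, wx, !(pmul_assoc (pmul _ _) (pmul _ _)), e1, pmul_lcomm, e2.
    reflexivity.
Qed.

Lemma lcls_eq_iff (x y : locpair S) : lcls x = lcls y <-> locR x y.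
Proof. exact (cls_eq_iff locR_equiv x y). Qed.

Lemma lcls_surj (X : Loc S) : exists x, X = lcls x.
Proof. exact (cls_surj X). Qed.
End Localization.

(* [ps_zero (Loc S)] and [ps_one (Loc S)] are [loc_const pzero] and [loc_const pone]. *)
Definition loc_const (A : PartialRing) (S : A -> Prop) (c : A) (X : Loc S) : Prop :=
  exists z : locpair S, lp_num z = c /\ lp_den z = pone /\ X = lcls z.

Section LocalizationMap.
Variables (A : PartialRing) (S S' : A -> Prop) (hS : forall a, S a -> S' a).
Hypothesis S'_mul : forall a b, S' a -> S' b -> S' (pmul a b).

Definition lp_relabel (x : locpair S) : locpair S' :=
  exist _ (proj1_sig x) (hS (proj2_sig x)).

Definition loc_map : Loc S -> Loc S' := qlift (fun x => lcls (lp_relabel x)).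

Lemma loc_map_lcls (x : locpair S) : loc_map (lcls x) = lcls (lp_relabel x).
Proof.
  apply (qlift_cls (@locR_refl A S) (f := fun y => lcls (lp_relabel y))). intros y z [u [Su e]].
  apply lcls_eq_iff; [exact S'_mul|]. exists u. split; [apply hS|]; assumption.
Qed.

Definition lp_lift (x : locpair S') (hx : S (lp_den x)) : locpair S :=
  exist _ (proj1_sig x) hx.

Lemma loc_map_lift (x : locpair S') (hx : S (lp_den x)) : loc_map (lcls (lp_lift hx)) = lcls x.
Proof. rewrite loc_map_lcls. f_equal. now apply sig_ext. Qed.

Lemma loc_map_const (c : A) (X : Loc S) : loc_const c X -> loc_const c (loc_map X).
Proof. intros [z [zc [z1 ->]]]. rewrite loc_map_lcls. now exists (lp_relabel z). Qed.

Lemma loc_map_add (X Y Z : Loc S) :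
  ps_add (Loc S) X Y Z -> ps_add (Loc S') (loc_map X) (loc_map Y) (loc_map Z).
Proof.
  intros [x [y [z [u [Su [-> [-> [-> sum]]]]]]]]. rewrite !loc_map_lcls.
  exists (lp_relabel x), (lp_relabel y), (lp_relabel z), u. auto.
Qed.

Lemma loc_map_mul (X Y Z : Loc S) :
  ps_mul (Loc S) X Y Z -> ps_mul (Loc S') (loc_map X) (loc_map Y) (loc_map Z).
Proof.
  intros [x [y [z [-> [-> [-> prod]]]]]]. rewrite !loc_map_lcls.
  now exists (lp_relabel x), (lp_relabel y), (lp_relabel z).
Qed.
End LocalizationMap.

Lemma loc_map_comp (A : PartialRing) (S1 S2 S3 : A -> Prop)
  (S2_mul : forall a b, S2 a -> S2 b -> S2 (pmul a b))
  (S3_mul : forall a b, S3 a -> S3 b -> S3 (pmul a b))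
  (h12 : forall a, S1 a -> S2 a) (h23 : forall a, S2 a -> S3 a)
  (h13 : forall a, S1 a -> S3 a) (X : Loc S1) :
  loc_map h23 (loc_map h12 X) = loc_map h13 X.
Proof.
  destruct (lcls_surj X) as [x ->].
  rewrite !loc_map_lcls by assumption. f_equal. now apply sig_ext.
Qed.

(** * Stalks and sheafification *)

Section Germs.
Variables (X : Type) (opn : (X -> Prop) -> Prop) (F : Presheaf X) (p : X).

Lemma germ_surj (G : Stalk opn F p) :
  exists U (hU : opn U /\ U p) s, G = germ hU s.
Proof. destruct (cls_surj G) as [[U [hU s]] ->]. now exists U, hU, s. Qed.

Definition stalk_rel1 (R : forall U, sec F U -> Prop) (G : Stalk opn F p) : Prop :=
  exists U (hU : opn U /\ U p) s, R U s /\ G = germ hU s.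

Definition stalk_rel3 (R : forall U, sec F U -> sec F U -> sec F U -> Prop)
  (G H K : Stalk opn F p) : Prop :=
  exists U (hU : opn U /\ U p) s t r,
    R U s t r /\ G = germ hU s /\ H = germ hU t /\ K = germ hU r.

Section Transfer.
Variables (N : Type) (v : Stalk opn F p -> N).
Hypothesis v_inj : forall G H, v G = v H -> G = H.

Lemma stalk_rel1_transfer (R : forall U, sec F U -> Prop) (RN : N -> Prop) :
  (forall U (hU : opn U /\ U p) s, R U s -> RN (v (germ hU s))) ->
  (forall x, RN x -> exists U (hU : opn U /\ U p) s, R U s /\ v (germ hU s) = x) ->
  forall G, stalk_rel1 R G <-> RN (v G).
Proof.
  intros R_RN RN_R G. split.
  - intros [U [hU [s [Rs ->]]]]. auto.
  - intros RNG. destruct (RN_R _ RNG) as [U [hU [s [Rs vs]]]].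
    exists U, hU, s. split; [exact Rs | apply v_inj; congruence].
Qed.

Lemma stalk_rel3_transfer (R : forall U, sec F U -> sec F U -> sec F U -> Prop)
  (RN : N -> N -> N -> Prop) :
  (forall U (hU : opn U /\ U p) s t r,
      R U s t r -> RN (v (germ hU s)) (v (germ hU t)) (v (germ hU r))) ->
  (forall x y z, RN x y z -> exists U (hU : opn U /\ U p) s t r, R U s t r /\
      v (germ hU s) = x /\ v (germ hU t) = y /\ v (germ hU r) = z) ->
  forall G H K, stalk_rel3 R G H K <-> RN (v G) (v H) (v K).
Proof.
  intros R_RN RN_R G H K. split.
  - intros [U [hU [s [t [r [Rstr [-> [-> ->]]]]]]]]. auto.
  - intros RNGHK. destruct (RN_R _ _ _ RNGHK) as [U [hU [s [t [r [Rstr [vs [vt vr]]]]]]]].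
    exists U, hU, s, t, r. split; [exact Rstr|].
    split; [|split]; apply v_inj; congruence.
Qed.
End Transfer.

Hypothesis opn_inter : forall U V, opn U -> opn V -> opn (fun x => U x /\ V x).
Hypothesis res_comp : forall U V W (hVU : forall x, V x -> U x)
  (hWV : forall x, W x -> V x) (hWU : forall x, W x -> U x) (s : sec F U),
  res F hWV (res F hVU s) = res F hWU s.

Lemma germR_equiv : Equivalence (@germR X opn F p).
Proof.
  split.
  - intros [U [[oU Up] s]]. exists U, (fun x hx => hx), (fun x hx => hx). auto.
  - intros g h [W [hWg [hWh [oW [Wp e]]]]]. now exists W, hWh, hWg.
  - intros g h k [W1 [hg1 [hh1 [o1 [p1 e1]]]]] [W2 [hh2 [hk2 [o2 [p2 e2]]]]].
    set (W := fun x => W1 x /\ W2 x).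
    assert (hW1 : forall x, W x -> W1 x) by (intros x hx; exact (proj1 hx)).
    assert (hW2 : forall x, W x -> W2 x) by (intros x hx; exact (proj2 hx)).
    exists W, (fun x hx => hg1 x (hW1 x hx)), (fun x hx => hk2 x (hW2 x hx)).
    split; [now apply opn_inter | split; [now split|]].
    rewrite <- (res_comp hg1 hW1), e1, (res_comp hh1 hW1 (fun x hx => hh1 x (hW1 x hx))).
    rewrite <- (res_comp hh2 hW2), e2. apply res_comp.
Qed.

Lemma germ_eq U V (hU : opn U /\ U p) (hV : opn V /\ V p) (s : sec F U) (t : sec F V)
  W (hWU : forall x, W x -> U x) (hWV : forall x, W x -> V x) :
  opn W -> W p -> res F hWU s = res F hWV t -> germ hU s = germ hV t.
Proof. intros oW Wp e. apply (cls_eq_iff germR_equiv). now exists W, hWU, hWV. Qed.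

Lemma germ_eq_inv U V (hU : opn U /\ U p) (hV : opn V /\ V p) (s : sec F U) (t : sec F V) :
  germ hU s = germ hV t -> exists W (hWU : forall x, W x -> U x) (hWV : forall x, W x -> V x),
    opn W /\ W p /\ res F hWU s = res F hWV t.
Proof. intro e. exact (proj1 (cls_eq_iff germR_equiv _ _) e). Qed.
End Germs.

Section Sheafification.
Variables (X : Type) (opn : (X -> Prop) -> Prop) (F : Presheaf X).

Lemma sheaf_res_comp U V W (hVU : forall x, V x -> U x) (hWV : forall x, W x -> V x)
  (hWU : forall x, W x -> U x) (s : sec (Sheafify opn F) U) :
  res (Sheafify opn F) hWV (res (Sheafify opn F) hVU s) = res (Sheafify opn F) hWU s.
Proof.
  apply sig_ext; cbn.
  apply functional_extensionality_dep; intro x; apply functional_extensionality; intro hx.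
  f_equal. apply proof_irrelevance.
Qed.

Lemma germ_section_locally_induced V (hV : opn V) (t : sec F V) :
  locally_induced (fun x (hx : V x) => germ (F := F) (conj hV hx) t).
Proof.
  intros x hx. exists V, hV. split; [exact hx|].
  exists t. intros y hy hy'. now rewrite (proof_irrelevance _ hy hy').
Qed.

Definition germ_section V (hV : opn V) (t : sec F V) : sec (Sheafify opn F) V :=
  exist _ _ (germ_section_locally_induced hV t).

Hypothesis opn_inter : forall U V, opn U -> opn V -> opn (fun x => U x /\ V x).
Hypothesis res_comp : forall U V W (hVU : forall x, V x -> U x)
  (hWV : forall x, W x -> V x) (hWU : forall x, W x -> U x) (s : sec F U),
  res F hWV (res F hVU s) = res F hWU s.
Variable p : X.

Definition stalk_eval : Stalk opn (Sheafify opn F) p -> Stalk opn F p :=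
  qlift (fun g : GermRep opn (Sheafify opn F) p =>
           proj1_sig (gs g) p (proj2 (fst (projT2 g)))).

Lemma stalk_eval_germ U (oU : opn U) (Up : U p) (s : sec (Sheafify opn F) U) :
  stalk_eval (germ (conj oU Up) s) = proj1_sig s p Up.
Proof.
  unfold stalk_eval, germ.
  rewrite (qlift_cls (@Equivalence_Reflexive _ _ (germR_equiv p opn_inter (@sheaf_res_comp)))).
  (* [proj2] is opaque: [proj2 (conj oU Up)] does not reduce to [Up]. *)
  { cbn. f_equal. apply proof_irrelevance. }
  intros g h [W [hWg [hWh [oW [Wp e]]]]].
  apply (f_equal (fun s => proj1_sig s p Wp)) in e. cbn in e.
  transitivity (proj1_sig (gs g) p (hWg p Wp)); [f_equal; apply proof_irrelevance|].
  etransitivity; [exact e|]. f_equal. apply proof_irrelevance.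
Qed.

Lemma germ_sheafify_canonical (G : Stalk opn (Sheafify opn F) p) :
  exists V (hV : opn V) (Vp : V p) t, G = germ (conj hV Vp) (germ_section hV t).
Proof.
  destruct (germ_surj G) as [U [hU [s ->]]].
  destruct (proj2_sig s p (proj2 hU)) as [V [hV [Vp [t ht]]]].
  exists V, hV, Vp, t.
  apply (germ_eq opn_inter (@sheaf_res_comp))
    with (W := fun x => U x /\ V x) (hWU := fun x hx => proj1 hx) (hWV := fun x hx => proj2 hx).
  - apply opn_inter; [exact (proj1 hU) | exact hV].
  - split; [exact (proj2 hU) | exact Vp].
  - apply sig_ext; cbn.
    apply functional_extensionality_dep; intro y; apply functional_extensionality; intro hy.
    apply ht.
Qed.

Lemma germ_section_eq V1 V2 (hV1 : opn V1) (hV2 : opn V2) (Vp1 : V1 p) (Vp2 : V2 p)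
  (t1 : sec F V1) (t2 : sec F V2) :
  germ (conj hV1 Vp1) t1 = germ (conj hV2 Vp2) t2 ->
  germ (conj hV1 Vp1) (germ_section hV1 t1) = germ (conj hV2 Vp2) (germ_section hV2 t2).
Proof.
  intro e. destruct (germ_eq_inv opn_inter res_comp e) as [W [hW1 [hW2 [oW [Wp eW]]]]].
  apply (germ_eq opn_inter (@sheaf_res_comp)) with (W := W) (hWU := hW1) (hWV := hW2); auto.
  apply sig_ext; cbn.
  apply functional_extensionality_dep; intro y; apply functional_extensionality; intro hy.
  now apply (germ_eq opn_inter res_comp) with (W := W) (hWU := hW1) (hWV := hW2).
Qed.

Lemma stalk_eval_inj (G H : Stalk opn (Sheafify opn F) p) :
  stalk_eval G = stalk_eval H -> G = H.
Proof.
  destruct (germ_sheafify_canonical G) as [V1 [hV1 [Vp1 [t1 ->]]]].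
  destruct (germ_sheafify_canonical H) as [V2 [hV2 [Vp2 [t2 ->]]]].
  rewrite !stalk_eval_germ. apply germ_section_eq.
Qed.

Lemma stalk_eval_surj (g : Stalk opn F p) : exists G, stalk_eval G = g.
Proof.
  destruct (germ_surj g) as [V [[hV Vp] [t ->]]].
  exists (germ (conj hV Vp) (germ_section hV t)). apply stalk_eval_germ.
Qed.

Lemma stalk_eval_rel1 (R : forall U, sec F U -> Prop) (G : Stalk opn (Sheafify opn F) p) :
  stalk_rel1 (fun U (s : sec (Sheafify opn F) U) =>
                forall x hx, stalk_rel1 (p := x) R (proj1_sig s x hx)) G
  <-> stalk_rel1 R (stalk_eval G).
Proof.
  apply (stalk_rel1_transfer stalk_eval_inj).
  - intros U [oU Up] s Rs. rewrite stalk_eval_germ. apply Rs.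
  - intros g [U [[oU Up] [s [Rs ->]]]].
    exists U, (conj oU Up), (germ_section oU s). split; [|apply stalk_eval_germ].
    intros x hx. now exists U, (conj oU hx), s.
Qed.

Lemma stalk_eval_rel3 (R : forall U, sec F U -> sec F U -> sec F U -> Prop)
  (G H K : Stalk opn (Sheafify opn F) p) :
  stalk_rel3 (fun U (s t r : sec (Sheafify opn F) U) =>
                forall x hx, stalk_rel3 (p := x) R
                               (proj1_sig s x hx) (proj1_sig t x hx) (proj1_sig r x hx)) G H K
  <-> stalk_rel3 R (stalk_eval G) (stalk_eval H) (stalk_eval K).
Proof.
  apply (stalk_rel3_transfer stalk_eval_inj).
  - intros U [oU Up] s t r Rstr. rewrite !stalk_eval_germ. apply Rstr.
  - intros g h k [U [[oU Up] [s [t [r [Rstr [-> [-> ->]]]]]]]].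
    exists U, (conj oU Up), (germ_section oU s), (germ_section oU t), (germ_section oU r).
    split; [|split; [|split]]; try apply stalk_eval_germ.
    intros x hx. now exists U, (conj oU hx), s, t, r.
Qed.

Theorem stalk_sheafify_iso : pr_iso stalk_eval.
Proof.
  split; [exact stalk_eval_inj|]. split; [exact stalk_eval_surj|].
  split; [intro G; exact (stalk_eval_rel1 (fun U => ps_zero (sec F U)) G)|].
  split; [intro G; exact (stalk_eval_rel1 (fun U => ps_one (sec F U)) G)|].
  split; intros G H K.
  - exact (stalk_eval_rel3 (fun U => ps_add (sec F U)) G H K).
  - exact (stalk_eval_rel3 (fun U => ps_mul (sec F U)) G H K).
Qed.
End Sheafification.

(** * The stalk of the structure presheaf *)

Section Spectrum.
Variable A : PartialRing.

Lemma prime_compl_mul (q : Spec A) (a b : A) :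
  ~ proj1_sig q a -> ~ proj1_sig q b -> ~ proj1_sig q (pmul a b).
Proof.
  intros qa qb qab. destruct (proj2 (proj2 (proj2_sig q)) a b qab); auto.
Qed.

Lemma S_U_mul (U : Spec A -> Prop) (a b : A) : S_U U a -> S_U U b -> S_U U (pmul a b).
Proof. intros Ua Ub q Uq. apply prime_compl_mul; auto. Qed.

Lemma opnX_inter (U V : Spec A -> Prop) : opnX U -> opnX V -> opnX (fun q => U q /\ V q).
Proof.
  intros oU oV q [Uq Vq].
  destruct (oU q Uq) as [l1 [l1q l1U]], (oV q Vq) as [l2 [l2q l2V]].
  exists (l1 ++ l2). split.
  - intros a ha. apply in_app_iff in ha as [ha | ha]; auto.
  - intros r hr. split; [apply l1U | apply l2V]; intros a ha; apply hr, in_app_iff; auto.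
Qed.

Definition S_U_anti (U V : Spec A -> Prop) (hVU : forall q, V q -> U q) :
  forall a, S_U U a -> S_U V a :=
  fun a Ua q Vq => Ua q (hVU q Vq).

Lemma Opre_res_loc_map U V (hVU : forall q, V q -> U q) (X : sec (Opre A) U) :
  res (Opre A) hVU X = loc_map (S_U_anti hVU) X.
Proof. reflexivity. Qed.

Lemma Opre_res_comp U V W (hVU : forall q, V q -> U q) (hWV : forall q, W q -> V q)
  (hWU : forall q, W q -> U q) (X : sec (Opre A) U) :
  res (Opre A) hWV (res (Opre A) hVU X) = res (Opre A) hWU X.
Proof. rewrite !Opre_res_loc_map. apply loc_map_comp; apply S_U_mul. Qed.

Variable p : Spec A.

Lemma basic_nbhd (l : list A) : (forall a, In a l -> ~ proj1_sig p a) ->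
  exists U (hU : opnX U /\ U p), forall a, In a l -> S_U U a.
Proof.
  intro lp. exists (fun q => forall a, In a l -> Dset a q). split.
  - split; [|exact lp]. intros q lq. now exists l.
  - intros a ha q lq. exact (lq a ha).
Qed.

Definition S_U_at (U : Spec A -> Prop) (Up : U p) :
  forall a, S_U U a -> ~ proj1_sig p a :=
  fun a Ua => Ua p Up.

Definition germ_value : Stalk (@opnX A) (Opre A) p -> Loc_at p :=
  qlift (fun g : GermRep (@opnX A) (Opre A) p =>
           loc_map (S_U_at (proj2 (fst (projT2 g)))) (gs g)).

Lemma germ_value_germ U (oU : opnX U) (Up : U p) (X : sec (Opre A) U) :
  germ_value (germ (conj oU Up) X) = loc_map (S_U_at Up) X.
Proof.
  unfold germ_value, germ.
  rewrite (qlift_cls (@Equivalence_Reflexive _ _ (germR_equiv p (@opnX_inter) Opre_res_comp))).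
  { cbn. now rewrite (proof_irrelevance _ (proj2 (conj oU Up)) Up). }
  intros g h [W [hWg [hWh [oW [Wp e]]]]].
  rewrite <- (loc_map_comp (@S_U_mul W) (@prime_compl_mul p) (S_U_anti hWg) (S_U_at Wp)),
    <- (loc_map_comp (@S_U_mul W) (@prime_compl_mul p) (S_U_anti hWh) (S_U_at Wp)).
  rewrite <- !Opre_res_loc_map. now f_equal.
Qed.

Lemma germ_value_lcls U (oU : opnX U) (Up : U p) (x : locpair (S_U U)) :
  germ_value (germ (F := Opre A) (conj oU Up) (lcls x)) = lcls (lp_relabel (S_U_at Up) x).
Proof. rewrite germ_value_germ. apply loc_map_lcls, prime_compl_mul. Qed.

Lemma germ_value_inj (G H : Stalk (@opnX A) (Opre A) p) :
  germ_value G = germ_value H -> G = H.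
Proof.
  destruct (germ_surj G) as [U [[oU Up] [X ->]]], (lcls_surj X) as [x ->].
  destruct (germ_surj H) as [V [[oV Vp] [Y ->]]], (lcls_surj Y) as [y ->].
  rewrite !germ_value_lcls, (lcls_eq_iff (@prime_compl_mul p)). intros [u [pu e]].
  destruct (basic_nbhd (l := [u])) as [D [[oD Dp] Du]]; [intros a [<-|[]]; exact pu|].
  apply (germ_eq (@opnX_inter) Opre_res_comp)
    with (W := fun q => U q /\ V q /\ D q)
         (hWU := fun q hq => proj1 hq) (hWV := fun q hq => proj1 (proj2 hq)).
  - apply opnX_inter; [|apply opnX_inter]; assumption.
  - now repeat split.
  - rewrite !Opre_res_loc_map, !loc_map_lcls by apply S_U_mul.
    apply lcls_eq_iff; [apply S_U_mul|]. exists u. split; [|exact e].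
    intros q hq. exact (Du u (or_introl eq_refl) q (proj2 (proj2 hq))).
Qed.

Lemma germ_value_lift U (oU : opnX U) (Up : U p) (x : locpair (fun a => ~ proj1_sig p a))
  (hx : S_U U (lp_den x)) :
  germ_value (germ (F := Opre A) (conj oU Up) (lcls (lp_lift hx))) = lcls x.
Proof. rewrite germ_value_germ. apply loc_map_lift, prime_compl_mul. Qed.

Lemma germ_value_surj (X : Loc_at p) : exists G, germ_value G = X.
Proof.
  destruct (lcls_surj X) as [x ->].
  destruct (basic_nbhd (l := [lp_den x])) as [U [[oU Up] hl]];
    [intros a [<-|[]]; exact (proj2_sig x)|].
  assert (hx : S_U U (lp_den x)) by (apply hl; now left).
  exists (germ (F := Opre A) (conj oU Up) (lcls (lp_lift hx))). apply germ_value_lift.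
Qed.

Lemma germ_value_const (c : A) (G : Stalk (@opnX A) (Opre A) p) :
  stalk_rel1 (F := Opre A) (fun U => loc_const (S := S_U U) c) G <-> loc_const c (germ_value G).
Proof.
  apply (stalk_rel1_transfer germ_value_inj).
  - intros U [oU Up] s sc. rewrite germ_value_germ.
    now apply loc_map_const; [apply prime_compl_mul|].
  - intros X [z [zc [z1 ->]]].
    destruct (basic_nbhd (l := [lp_den z])) as [U [[oU Up] hl]];
      [intros a [<-|[]]; exact (proj2_sig z)|].
    assert (hz : S_U U (lp_den z)) by (apply hl; now left).
    exists U, (conj oU Up), (lcls (lp_lift hz)). split; [now exists (lp_lift hz)|].
    apply germ_value_lift.
Qed.

Lemma germ_value_add (G H K : Stalk (@opnX A) (Opre A) p) :
  ps_add (Stalk (@opnX A) (Opre A) p) G H K <->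
  ps_add (Loc_at p) (germ_value G) (germ_value H) (germ_value K).
Proof.
  apply (stalk_rel3_transfer germ_value_inj (R := fun U => ps_add (sec (Opre A) U))).
  - intros U [oU Up] s t r sum. rewrite !germ_value_germ.
    now apply loc_map_add; [apply prime_compl_mul|].
  - intros X Y Z [x [y [z [u [pu [-> [-> [-> sum]]]]]]]].
    destruct (basic_nbhd (l := [lp_den x; lp_den y; lp_den z; u])) as [U [[oU Up] hl]].
    { intros a [<-|[<-|[<-|[<-|[]]]]];
        [exact (proj2_sig x) | exact (proj2_sig y) | exact (proj2_sig z) | exact pu]. }
    assert (hx : S_U U (lp_den x)) by (apply hl; simpl; auto).
    assert (hy : S_U U (lp_den y)) by (apply hl; simpl; auto).
    assert (hz : S_U U (lp_den z)) by (apply hl; simpl; auto).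
    assert (hu : S_U U u) by (apply hl; simpl; auto).
    exists U, (conj oU Up), (lcls (lp_lift hx)), (lcls (lp_lift hy)), (lcls (lp_lift hz)).
    split; [now exists (lp_lift hx), (lp_lift hy), (lp_lift hz), u|].
    now rewrite !germ_value_lift.
Qed.

Lemma germ_value_mul (G H K : Stalk (@opnX A) (Opre A) p) :
  ps_mul (Stalk (@opnX A) (Opre A) p) G H K <->
  ps_mul (Loc_at p) (germ_value G) (germ_value H) (germ_value K).
Proof.
  apply (stalk_rel3_transfer germ_value_inj (R := fun U => ps_mul (sec (Opre A) U))).
  - intros U [oU Up] s t r prod. rewrite !germ_value_germ.
    now apply loc_map_mul; [apply prime_compl_mul|].
  - intros X Y Z [x [y [z [-> [-> [-> prod]]]]]].
    destruct (basic_nbhd (l := [lp_den x; lp_den y; lp_den z])) as [U [[oU Up] hl]].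
    { intros a [<-|[<-|[<-|[]]]];
        [exact (proj2_sig x) | exact (proj2_sig y) | exact (proj2_sig z)]. }
    assert (hx : S_U U (lp_den x)) by (apply hl; simpl; auto).
    assert (hy : S_U U (lp_den y)) by (apply hl; simpl; auto).
    assert (hz : S_U U (lp_den z)) by (apply hl; simpl; auto).
    exists U, (conj oU Up), (lcls (lp_lift hx)), (lcls (lp_lift hy)), (lcls (lp_lift hz)).
    split; [now exists (lp_lift hx), (lp_lift hy), (lp_lift hz)|].
    now rewrite !germ_value_lift.
Qed.

Theorem stalk_Opre_iso : pr_iso germ_value.
Proof.
  split; [exact germ_value_inj|]. split; [exact germ_value_surj|].
  split; [exact (germ_value_const pzero)|]. split; [exact (germ_value_const pone)|].
  split; [exact germ_value_add | exact germ_value_mul].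
Qed.
End Spectrum.

Theorem mainTheorem11 (A : PartialRing) (p : Spec A) :
  exists f : Stalk (@opnX A) (OX A) p -> Loc_at p, pr_iso f.
Proof.
  exists (fun G => germ_value (stalk_eval G)).
  apply pr_iso_comp.
  - exact (stalk_sheafify_iso (@opnX_inter A) (@Opre_res_comp A) p).
  - exact (stalk_Opre_iso p).
Qed.
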